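(* For $n\in\mathbb N$, let $\sigma$ be the measure on $L_n$ given by $\sigma(j)=\sin\big(\frac{j\pi}{n+1}\big)$, $1\le j\le n$. Then $C^0_\sigma=1+2\cos\big(\frac{\pi}{n+1}\big)$.
   Context: $L_n$ is the path graph with vertices $\{1,\dots,n\}$ and edges $\{j,j+1\}$, with distance $|i-j|$. For a weight function $\mu:\{1,\dots,n\}\to(0,\infty)$, $\mu(A)=\sum_{v\in A}\mu(v)$, $B(x,r)=\{y:|x-y|\le r\}$ and $C^0_\mu=\max_{1\le x\le n}\mu(B(x,1))/\mu(x)$. *)

From Stdlib Require Import Reals List Arith Lia Lra.
Import ListNotations.
Open Scope R_scope.

Definition vertices (n : nat) : list nat := seq 1 n.

Definition pdist (i j : nat) : nat := if (i <=? j)%nat then (j - i)%nat else (i - j)%nat.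

Definition ball (n x r : nat) : list nat :=
  filter (fun y => (pdist x y <=? r)%nat) (vertices n).

(* mu(A) = sum_{v in A} mu(v) for A a (duplicate-free) list of vertices. *)
Definition meas (mu : nat -> R) (A : list nat) : R :=
  fold_right (fun v acc => mu v + acc) 0 A.

Definition list_max (l : list R) : R :=
  match l with
  | [] => 0
  | a :: t => fold_right Rmax a t
  end.

Definition C0 (n : nat) (mu : nat -> R) : R :=
  list_max (map (fun x => meas mu (ball n x 1) / mu x) (vertices n)).

Definition sigma_meas (n : nat) : nat -> R :=
  fun j => sin (INR j * PI / INR (n + 1)).

(* The formula sin(jh), h = pi/(n+1), extends sigma to 0 and n+1 with value 0, so
   every ball B(x,1) has measure sigma(x-1) + sigma(x) + sigma(x+1), endpoints included.
   Since sigma is an eigenfunction of the path Laplacian,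
   sin((x-1)h) + sin((x+1)h) = 2 cos h sin(xh), the ratio sigma(B(x,1))/sigma(x)
   equals 1 + 2 cos h at every vertex, and so does its maximum. *)
From Pilot Require Import Defs.
From Stdlib Require Import Reals List Lia Lra.
Import ListNotations.
Open Scope R_scope.

Lemma meas_app (mu : nat -> R) (l1 l2 : list nat) :
  meas mu (l1 ++ l2) = meas mu l1 + meas mu l2.
Proof. induction l1 as [|a l1 IH]; simpl; [lra | rewrite IH; lra]. Qed.

Lemma pdist_le1 (x y : nat) : (pdist x y <= 1)%nat <-> (x <= S y /\ y <= S x)%nat.
Proof. unfold pdist; destruct (Nat.leb_spec x y); lia. Qed.

Lemma filter_ball1_far (x a k : nat) : (a + k < x \/ S x < a)%nat ->
  filter (fun y => pdist x y <=? 1)%nat (seq a k) = [].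
Proof.
  intros Hfar. rewrite <- (filter_false (seq a k)).
  apply filter_ext_in. intros y Hy%in_seq.
  apply Nat.leb_gt. rewrite Nat.lt_nge, pdist_le1. lia.
Qed.

Lemma filter_ball1_near (x : nat) : (1 <= x)%nat ->
  filter (fun y => pdist x y <=? 1)%nat (seq (x - 1) 3) = [x - 1; x; S x]%nat.
Proof.
  destruct x as [|k]; [lia|]. intros _.
  rewrite Nat.sub_succ, Nat.sub_0_r. cbn [seq].
  apply forallb_filter_id. apply forallb_forall.
  intros y Hy. apply Nat.leb_le, pdist_le1.
  destruct Hy as [<- | [<- | [<- | []]]]; lia.
Qed.

(* Padding the path with the vertices 0 and n+1 makes B(x,1) the full triple
   {x-1, x, x+1} at every x, including the endpoints. *)
Lemma meas_ball1 (mu : nat -> R) (n x : nat) :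
  mu 0%nat = 0 -> mu (S n) = 0 -> (1 <= x <= n)%nat ->
  meas mu (ball n x 1) = mu (x - 1)%nat + mu x + mu (S x).
Proof.
  intros H0 Hn Hx.
  assert (Hpad : meas mu (filter (fun y => pdist x y <=? 1)%nat (seq 0 (S (S n))))
                 = meas mu (ball n x 1)).
  { rewrite seq_S, Nat.add_0_l, filter_app, meas_app. cbn [seq filter].
    unfold ball, vertices, meas.
    destruct (pdist x 0 <=? 1)%nat, (pdist x (S n) <=? 1)%nat;
      cbn [fold_right]; rewrite ?H0, ?Hn; lra. }
  rewrite <- Hpad.
  replace (S (S n)) with (x - 1 + (3 + (n - x)))%nat by lia.
  rewrite !seq_app, !filter_app, filter_ball1_near, !filter_ball1_far by lia.
  cbn [meas fold_right app]. lra.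
Qed.

Lemma list_max_map_const {A : Type} (f : A -> R) (c : R) (l : list A) :
  l <> [] -> (forall x, In x l -> f x = c) -> Defs.list_max (map f l) = c.
Proof.
  destruct l as [|a l]; [congruence|]. intros _ Hc. cbn.
  rewrite (Hc a (or_introl eq_refl)).
  assert (Hl : forall x, In x l -> f x = c) by (intros; apply Hc; right; assumption).
  clear Hc. induction l as [|b l IH]; cbn; [reflexivity|].
  rewrite IH, (Hl b (or_introl eq_refl)) by (intros; apply Hl; right; assumption).
  apply Rmax_left, Rle_refl.
Qed.

Lemma sin_sub_add (a h : R) : sin (a - h) + sin (a + h) = 2 * cos h * sin a.
Proof. rewrite sin_minus, sin_plus. ring. Qed.

Section SineMeasure.

Variable n : nat.

Let h : R := PI / INR (n + 1).

Lemma INR_succ_pos : 0 < INR (n + 1).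
Proof. apply lt_0_INR. lia. Qed.

Lemma h_pos : 0 < h.
Proof. apply Rdiv_lt_0_compat; [apply PI_RGT_0 | apply INR_succ_pos]. Qed.

Lemma INR_succ_mul_h : INR (n + 1) * h = PI.
Proof. unfold h. field. apply Rgt_not_eq, INR_succ_pos. Qed.

Lemma sigma_measE (j : nat) : sigma_meas n j = sin (INR j * h).
Proof. unfold sigma_meas, h. f_equal. field. apply Rgt_not_eq, INR_succ_pos. Qed.

Lemma sigma_meas_0 : sigma_meas n 0 = 0.
Proof. rewrite sigma_measE. cbn [INR]. rewrite Rmult_0_l. apply sin_0. Qed.

Lemma sigma_meas_succ_n : sigma_meas n (S n) = 0.
Proof. rewrite sigma_measE, <- Nat.add_1_r, INR_succ_mul_h. apply sin_PI. Qed.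

Lemma sigma_meas_pos (x : nat) : (1 <= x <= n)%nat -> 0 < sigma_meas n x.
Proof.
  intros Hx. rewrite sigma_measE. pose proof h_pos.
  apply sin_gt_0.
  - apply Rmult_lt_0_compat; [apply lt_0_INR; lia | assumption].
  - rewrite <- INR_succ_mul_h. apply Rmult_lt_compat_r; [assumption |].
    apply lt_INR. lia.
Qed.

Lemma sigma_meas_ball1_ratio (x : nat) : (1 <= x <= n)%nat ->
  meas (sigma_meas n) (ball n x 1) / sigma_meas n x = 1 + 2 * cos h.
Proof.
  intros Hx. pose proof (sigma_meas_pos x Hx) as Hpos.
  rewrite meas_ball1 by (apply sigma_meas_0 || apply sigma_meas_succ_n || assumption).
  assert (Hadj : sigma_meas n (x - 1) + sigma_meas n (S x) = 2 * cos h * sigma_meas n x).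
  { rewrite !sigma_measE, (S_INR x), minus_INR, INR_1 by lia.
    replace ((INR x - 1) * h) with (INR x * h - h) by ring.
    replace ((INR x + 1) * h) with (INR x * h + h) by ring.
    apply sin_sub_add. }
  field_simplify_eq; [lra | apply Rgt_not_eq, Hpos].
Qed.

End SineMeasure.

Theorem lemma3p3 (n : nat) (hn : (1 <= n)%nat) :
  C0 n (sigma_meas n) = 1 + 2 * cos (PI / INR (n + 1)).
Proof.
  apply list_max_map_const.
  - unfold vertices. destruct n as [|m]; [lia | discriminate].
  - intros x Hx%in_seq. apply sigma_meas_ball1_ratio. lia.
Qed.
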